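(* Let $s,k$ be integers with $2\le s\le k$ and let $q$ be a prime power. If $q=2$, then \[b_q(k,s)\le \frac{s(k-s)+s+2}{\log_q\frac{q^s}{q^s-1}}+1.\] If $q\ge 3$, then \[b_q(k,s)\le (q^s-1)\cdot\frac{s(k-s)+s+2}{\log_q\left(\frac{q^4}{q^3-q+1}\right)}+1.\]
   Context: $\mathbb{F}_q^k$ is viewed as an affine space whose subspaces are the cosets (translates) of vector subspaces of $\mathbb{F}_q^k$; the codimension of an $i$-dimensional affine subspace is $k-i$. An (affine) $s$-blocking set in $\mathbb{F}_q^k$ is a set of points of $\mathbb{F}_q^k$ that contains at least one point of every affine subspace of dimension $k-s$. $b_q(k,s)$ denotes the smallest size of an $s$-blocking set in $\mathbb{F}_q^k$. *)

From Stdlib Require Import Reals.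
From mathcomp Require Import all_boot all_algebra.

Set Implicit Arguments.
Unset Strict Implicit.
Unset Printing Implicit Defensive.

Import GRing.Theory.

(* Points of F^k are row vectors 'rV[F]_k.  An affine subspace of dimension
   d is a coset  v + rowspace(U)  with U : 'M[F]_k of rank d; it consists of
   the x with (x - v <= U)%MS. *)
Definition in_affine (F : finFieldType) (k : nat) (v : 'rV[F]_k) (U : 'M[F]_k)
  (x : 'rV[F]_k) : bool := (GRing.add x (GRing.opp v) <= U)%MS.

Definition blocking (F : finFieldType) (k s : nat) (B : {set 'rV[F]_k}) : bool :=
  [forall v : 'rV[F]_k, forall U : 'M[F]_k,
     (\rank U == k - s)%N ==> [exists x in B, in_affine v U x]].

(* b_q(k,s): the smallest size of an s-blocking set in F^k (q = #|F|).
   The whole space is always s-blocking, so the minimum exists. *)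
Definition bq (F : finFieldType) (k s : nat) : nat :=
  #|[arg min_(B < [set: 'rV[F]_k] | blocking s B) #|B|]|.

Definition logb (b x : R) : R := Rdiv (ln x) (ln b).

From Stdlib Require Import Reals ZArith Lra Lia.
From mathcomp Require Import all_boot all_algebra zify.

Set Implicit Arguments.
Unset Strict Implicit.
Unset Printing Implicit Defensive.

(* Probabilistic method.  Take B = {0} u S(t_1) u ... u S(t_T) for independent uniform t_i,
   where S(t) is a single point (q = 2) or the set of nonzero vectors of the row space of an
   s x k matrix (q >= 3).  A (k-s)-flat avoiding 0 is {x | x M = c} with M : k x s of full
   rank and c != 0, and it has exactly |GL_s| such descriptions (M, c).  A random S(t) misses
   a fixed flat with probability (q^s - 1)/q^s for points, and at most (q^3 - q + 1)/q^4 for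
   row spaces (the first column of a uniform s x s matrix must lie in the span of the other
   columns).  As |GL_s| >= q^(s^2) (1 - 1/q - 1/q^2), the expected number of missed flats is
   below 1 once T + 1 > (s(k-s)+s+2) / log_q (1/p), p being the miss probability; then some
   B of size at most 1 + T |S| blocks every flat. *)

Lemma prod_pow_sub1_step q a : (2 <= q)%N -> (q * q <= a)%N ->
  (a * ((q * q - q - 1) * (q * a) + q * q) <=
   ((q * q - q - 1) * a + q * q) * (q * (a - 1)))%N.
Proof.
case: q => [|[|r]] // _; set q := r.+2 => qa.
have [b ->] : exists b, a = (b + q * q)%N by exists (a - q * q)%N; lia.
have -> : (q * q - q - 1 = r * r + 3 * r + 1)%N by rewrite /q; lia.
have -> : (b + q * q - 1 = b + (r * r + 4 * r + 3))%N by rewrite /q; lia.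
rewrite /q; nia.
Qed.

(* A form of prod_(i <= s) (1 - q^-i) >= 1 - 1/q - 1/q^2 strong enough for induction. *)
Lemma prod_pow_sub1_lower q s : (2 <= q)%N -> (0 < s)%N ->
  (q ^ 'C(s.+1, 2) * ((q * q - q - 1) * q ^ s.+1 + q * q) <=
   (\prod_(1 <= i < s.+1) (q ^ i - 1)) * q ^ s.+3)%N.
Proof.
move=> q2; elim: s => // s IH _; rewrite big_nat_recr //=.
case: s IH => [_ | s /(_ isT) IH].
  rewrite big_geq // bin2 /= !expnS expn0 !muln1 mul1n.
  case: q q2 => [|[|r]] // _; nia.
rewrite binS bin1 expnD.
set a := (q ^ s.+2)%N; set C := (q ^ 'C(s.+2, 2))%N.
set P := (\prod_(1 <= i < s.+2) (q ^ i - 1))%N.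
have qa : (q * q <= a)%N by rewrite /a -[(q * q)%N]/(q ^ 2)%N leq_pexp2l // (ltnW q2).
have e3 : (q ^ s.+3 = q * a)%N by rewrite expnS.
have e4 : (q ^ s.+4 = q * q * a)%N by rewrite /a -mulnA -!expnS.
have e5 : (q ^ s.+2.+3 = q * q * q * a)%N by rewrite /a -!mulnA -!expnS.
rewrite e4 -/a -/C -/P in IH; rewrite e5 e3 -mulnA.
apply: leq_trans (leq_mul (leqnn C) (prod_pow_sub1_step q2 qa)) _.
rewrite mulnA; apply: leq_trans (leq_mul IH (leqnn (q * (a - 1)))) _.
apply: eq_leq; clearbody a C P; move: (a - 1)%N => b; nia.
Qed.

Lemma addn_bin2_binS2 s : ('C(s, 2) + 'C(s.+1, 2) = s * s)%N.
Proof. by elim: s => // s IH; rewrite !(binS _ 1) !bin1 in IH *; lia. Qed.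

Lemma pow4_le_cubic q : (3 <= q)%N -> (q ^ 4 <= (q * q - q - 1) * (q ^ 3 - q + 1))%N.
Proof.
case: q => [|[|[|r]]] // _; rewrite !expnS expn0 !muln1.
have -> : (r.+3 * r.+3 - r.+3 - 1 = r * r + 5 * r + 5)%N by lia.
have -> : (r.+3 * (r.+3 * r.+3) - r.+3 + 1 = r * r * r + 9 * r * r + 26 * r + 25)%N by lia.
nia.
Qed.

Lemma colspan_count_arith q x y : (2 <= q)%N -> (x <= y)%N ->
  (x * x + (q ^ 2 * y - x) * (q * x) <= y * y * (q ^ 3 - q + 1))%N.
Proof.
move=> q2 /subnKC <-; set d := (y - x)%N; clearbody d; rewrite !expnS expn0 !muln1.
case: q q2 => [|[|r]] // _.
have -> : (r.+2 * r.+2 * (x + d) - x = (r * r + 4 * r + 3) * x + r.+2 * r.+2 * d)%N by nia.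
have -> : (r.+2 * (r.+2 * r.+2) - r.+2 + 1 = r.+2 * (r * r + 4 * r + 3) + 1)%N by nia.
nia.
Qed.

Lemma union_bound_arith q s k n K N D T :
  (0 < q)%N -> (0 < K)%N -> (0 < N)%N -> (0 < D)%N ->
  (s * s + n = k * s + s + 2)%N -> ((q ^ s - 1) * D <= q ^ s * K * N)%N ->
  (q ^ n * N ^ T.+1 < D ^ T.+1)%N ->
  (q ^ (k * s) * (q ^ s - 1) * N ^ T * (q * q) < q ^ (s * s) * K * D ^ T)%N.
Proof.
move=> q0 K0 N0 D0 expE DN key.
have PE : (q ^ (s * s) * q ^ n = q ^ (k * s) * q ^ s * (q * q))%N.
  by rewrite -[(q * q)%N]/(q ^ 2)%N -!expnD expE.
rewrite -(ltn_pmul2r (_ : 0 < N * D)%N) ?muln_gt0 ?N0 ?D0 //.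
rewrite !expnS -(@ltn_pmul2l (q ^ (s * s) * K * N)) ?muln_gt0 ?expn_gt0 ?q0 ?K0 ?N0 // in key.
have := leq_mul (leqnn (q ^ (k * s) * (q * q) * N ^ T * N)) DN.
have := congr1 (muln^~ (K * N * N * N ^ T)) PE.
move: key; move: (q ^ (s * s)) (q ^ n) (q ^ (k * s)) (q ^ s) (q ^ s - 1)%N (N ^ T) (D ^ T).
by move=> P E A B b Nt Dt; lia.
Qed.

Lemma card_bigcup_ord_le (T : finType) n (X : 'I_n -> {set T}) w :
  (forall i, #|X i| <= w) -> #|\bigcup_(i < n) X i| <= n * w.
Proof.
elim: n X => [|n IH] X Xw; first by rewrite big_ord0 cards0.
rewrite big_ord_recr /= mulSn addnC.
by apply: leq_trans (leq_card_setU _ _).1 _; rewrite leq_add ?IH.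
Qed.

Section RealBounds.
Local Open Scope R_scope.

Lemma INR_muln m n : INR (m * n) = INR m * INR n.
Proof. by rewrite -multE mult_INR. Qed.

Lemma INR_expn b n : INR (b ^ n) = INR b ^ n.
Proof. by elim: n => [|n IH] //=; rewrite expnS INR_muln IH. Qed.

Lemma INR_subn m n : (n <= m)%N -> INR (m - n) = INR m - INR n.
Proof. by move=> /leP nm; rewrite -minusE minus_INR. Qed.

Lemma INR_subn1 n : (0 < n)%N -> INR (n - 1) = INR n - 1.
Proof. by move=> n0; rewrite INR_subn. Qed.

Lemma exists_nat_floor x : 0 <= x -> exists T : nat, INR T <= x < INR T + 1.
Proof.
move=> x0; have [up_gt up_le] := archimed x.
have up1 : Z.lt 0 (up x) by apply: lt_0_IZR; lra.
exists (Z.to_nat (up x - 1)).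
by rewrite INR_IZR_INZ Z2Nat.id ?minus_IZR; lia || lra.
Qed.

Lemma exists_iterations (b N D n : nat) : (1 < b)%N -> (0 < N)%N -> (N < D)%N ->
  exists T : nat, (b ^ n * N ^ T.+1 < D ^ T.+1)%N /\
                  INR T <= INR n / logb (INR b) (INR D / INR N).
Proof.
move=> /ltP b1 /ltP N0 /ltP ND.
have [bpos Npos Dpos] : [/\ 0 < INR b, 0 < INR N & 0 < INR D].
  by split; apply: (lt_INR 0); lia.
have lnDN : ln (INR D / INR N) = ln (INR D) - ln (INR N).
  by rewrite /Rdiv ln_mult ?ln_Rinv //; apply: Rinv_0_lt_compat.
have lnb0 : 0 < ln (INR b) by rewrite -ln_1; apply: ln_increasing; [lra | apply: (lt_INR 1)].
have lnDN0 : 0 < ln (INR D / INR N).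
  by rewrite lnDN; have := ln_increasing _ _ Npos (lt_INR _ _ ND); lra.
set Y := INR n / logb (INR b) (INR D / INR N).
have EY : Y = INR n * ln (INR b) / ln (INR D / INR N) by rewrite /Y /logb; field; lra.
have [T [TY YT]] : exists T : nat, INR T <= Y < INR T + 1.
  apply: exists_nat_floor; rewrite EY; apply: Rmult_le_pos.
    by apply: Rmult_le_pos; [apply: pos_INR | lra].
  by apply/Rlt_le/Rinv_0_lt_compat.
exists T; split => //.
have lnE : INR n * ln (INR b) < INR T.+1 * ln (INR D / INR N).
  replace (INR n * ln (INR b)) with (Y * ln (INR D / INR N)) by (rewrite EY; field; lra).
  by rewrite S_INR; apply: Rmult_lt_compat_r.
apply/ltP/INR_lt; rewrite INR_muln !INR_expn.
have [bn NT DT] : [/\ 0 < INR b ^ n, 0 < INR N ^ T.+1 & 0 < INR D ^ T.+1].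
  by split; apply: pow_lt.
apply: ln_lt_inv => //; first exact: Rmult_lt_0_compat.
by rewrite ln_mult // !ln_pow //; rewrite lnDN in lnE; lra.
Qed.

Lemma INR_le_affine (b T w : nat) (Y : R) :
  (b <= 1 + T * w)%N -> INR T <= Y -> INR b <= INR w * Y + 1.
Proof.
move=> /leP bTw TY; apply: Rle_trans (le_INR _ _ bTw) _.
rewrite -plusE plus_INR INR_muln Rplus_comm Rmult_comm /=.
by apply: Rplus_le_compat_r; apply: Rmult_le_compat_l => //; apply: pos_INR.
Qed.

End RealBounds.

Import GRing.Theory.

Section Counting.
Local Open Scope ring_scope.
Variable F : finFieldType.
Local Notation q := #|F|.

Lemma card_preim_mulmx p k s (M : 'M[F]_(k, s)) (P : pred 'M[F]_(p, s)) : row_full M ->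
  (#|[set X : 'M_(p, k) | P (X *m M)]| * q ^ (p * s) = #|[set Y | P Y]| * q ^ (p * k))%N.
Proof.
move=> /row_fullP [N NM].
pose K := [set X : 'M[F]_(p, k) | X *m M == 0].
have fiber Y : #|[set X : 'M[F]_(p, k) | X *m M == Y]| = #|K|.
  rewrite -(card_imset K (addrI (Y *m N))); apply: eq_card => X.
  rewrite inE; apply/eqP/imsetP => [XY | [X' X'K ->]].
    exists (X - Y *m N); last by rewrite addrC subrK.
    by rewrite inE mulmxBl -mulmxA NM mulmx1 XY subrr.
  by move: X'K; rewrite inE mulmxDl -mulmxA NM mulmx1 => /eqP ->; rewrite addr0.
have card_preim (Q : pred 'M[F]_(p, s)) :
    #|[set X : 'M[F]_(p, k) | Q (X *m M)]| = (#|[set Y | Q Y]| * #|K|)%N.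
  rewrite -sum1_card (partition_big (fun X => X *m M) (mem [set Y | Q Y])) /=; last first.
    by move=> X; rewrite !inE.
  rewrite -sum_nat_const; apply: eq_bigr => Y QY.
  rewrite -(fiber Y) -sum1_card; apply: eq_bigl => X; rewrite !inE.
  by case: eqP => [->|]; rewrite ?andbT ?andbF //; move: QY; rewrite inE.
have := card_preim predT; rewrite !cardsT !card_mx => cardK.
by rewrite card_preim cardK -mulnA (mulnC #|K|).
Qed.

Definition level_set k s (M : 'M[F]_(k, s)) (c : 'rV[F]_s) : {set 'rV[F]_k} :=
  [set x | x *m M == c].

Lemma in_affine_level k s (v : 'rV[F]_k) (U : 'M[F]_k) : (s <= k)%N -> \rank U = (k - s)%N ->
  exists2 M : 'M[F]_(k, s), row_full M & forall x, in_affine v U x = (x \in level_set M (v *m M)).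
Proof.
move=> sk rU; have rC : \rank (cokermx U) = s by rewrite mxrank_coker rU subKn.
move: (col_base (cokermx U)) (row_base (cokermx U)) (mulmx_base (cokermx U))
  (col_base_full (cokermx U)) (row_base_free (cokermx U)).
rewrite rC => M R MR fullM freeR; exists M => // x.
rewrite /in_affine inE submxE -MR mulmxA -(mul0mx _ R) (inj_eq (row_free_inj freeR)).
by rewrite mulmxBl subr_eq0.
Qed.

Definition invertible_mx s : {set 'M[F]_s} := [set G | G \in unitmx].

Lemma card_invertible_mx_lower s : (0 < s)%N ->
  (q ^ (s * s) * (q * q - q - 1) <= #|invertible_mx s| * (q * q))%N.
Proof.
case: s => // n _; have q2 := card_finNzRing_gt1 F.
have -> : #|invertible_mx n.+1| = #|('GL_n.+1[F])%g|.
  by rewrite cardsT /= card_sub; apply: eq_card => A; rewrite inE.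
rewrite card_GL //; set s := n.+1.
have qs0 : (0 < q ^ s.+1)%N by rewrite expn_gt0 ltnW.
rewrite -(leq_pmul2r qs0) -[(s * s)%N]addn_bin2_binS2 expnD -!mulnA leq_mul2l.
apply/orP; right; rewrite -!expnS.
apply: leq_trans (prod_pow_sub1_lower q2 (ltn0Sn n)).
by rewrite leq_mul2l leq_addr orbT.
Qed.

(* Adding 0 leaves only the flats avoiding 0, i.e. the level sets with c != 0. *)
Definition family_union k (Om : finType) (S : Om -> {set 'rV[F]_k}) T
  (t : {ffun 'I_T -> Om}) : {set 'rV[F]_k} := 0 |: \bigcup_(i < T) S (t i).

Definition nz_levels k s : {set 'M[F]_(k, s) * 'rV[F]_s} :=
  [set p | row_full p.1 && (p.2 != 0)].

Lemma card_nz_levels k s : (#|nz_levels k s| <= q ^ (k * s) * (q ^ s - 1))%N.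
Proof.
have -> : (q ^ (k * s) * (q ^ s - 1) = #|setX [set: 'M[F]_(k, s)] [set~ (0%R : 'rV[F]_s)]|)%N.
  by rewrite cardsX cardsT cardsC1 !card_mx mul1n subn1.
by apply/subset_leq_card/subsetP => p; rewrite !inE => /andP [].
Qed.

(* The missed flat {x | x M = c} is also the level set of (M G, c G) for each invertible G. *)
Lemma invertible_le_missed_levels k s (B : {set 'rV[F]_k}) :
  (s <= k)%N -> 0 \in B -> ~~ blocking s B ->
  (#|invertible_mx s| <= #|[set p in nz_levels k s | [disjoint B & level_set p.1 p.2]]|)%N.
Proof.
move=> sk B0 /forallPn [v /forallPn [U]]; rewrite negb_imply => /andP [/eqP rU].
move=> /existsPn missB; have [M fullM levelM] := in_affine_level v sk rU.
set c := v *m M in levelM.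
have notB x : x \in B -> x *m M != c by move=> xB; have := missB x; rewrite xB levelM inE.
have c0 : c != 0 by have := notB 0 B0; rewrite mul0mx eq_sym.
have [N NM] := row_fullP fullM.
pose f (G : 'M[F]_s) := (M *m G, c *m G).
have f_inj : injective f.
  by move=> G1 G2 /(congr1 (mulmx N \o fst)); rewrite /= !mulmxA NM !mul1mx.
rewrite -(card_imset _ f_inj); apply/subset_leq_card/subsetP => y /imsetP [G].
rewrite inE => Gu ->; rewrite !inE /= /row_full mxrankMfree ?row_free_unit //.
have cG0 : c *m G != 0 by apply: contra c0 => /eqP cG; rewrite -(mulmxK Gu c) cG mul0mx.
rewrite -/(row_full M) fullM cG0 /=.
apply/pred0P => x /=; rewrite !inE mulmxA (can_eq (mulmxK Gu)).
by case xB: (x \in B) => //=; apply/negbTE/notB.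
Qed.

Lemma card_disjoint_family_union k (Om : finType) (S : Om -> {set 'rV[F]_k}) T
    (L : {set 'rV[F]_k}) : 0 \notin L ->
  #|[set t : {ffun 'I_T -> Om} | [disjoint family_union S t & L]]| =
  (#|[set w | [disjoint S w & L]]| ^ T)%N.
Proof.
move=> L0; rewrite -[T in RHS]card_ord -card_ffun_on; apply: eq_card => t.
rewrite !inE disjoints_subset subUset sub1set !inE L0 /=.
apply/bigcupsP/ffun_onP => [St i | St i _]; first by rewrite inE disjoints_subset St.
by have := St i; rewrite inE disjoints_subset.
Qed.

Definition missed_levels k s (Om : finType) (S : Om -> {set 'rV[F]_k}) T
  (t : {ffun 'I_T -> Om}) : {set 'M[F]_(k, s) * 'rV[F]_s} :=
  [set p in nz_levels k s | [disjoint family_union S t & level_set p.1 p.2]].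

Lemma sum_card_missed_levels k s (Om : finType) (S : Om -> {set 'rV[F]_k}) T :
  (\sum_(t : {ffun 'I_T -> Om}) #|missed_levels s S t| =
   \sum_(p in nz_levels k s) #|[set w | [disjoint S w & level_set p.1 p.2]]| ^ T)%N.
Proof.
transitivity (\sum_(t : {ffun 'I_T -> Om}) \sum_(p in nz_levels k s |
    [disjoint family_union S t & level_set p.1 p.2]) 1)%N.
  by apply: eq_bigr => t _; rewrite -sum1_card; apply: eq_bigl => p; rewrite inE.
rewrite (exchange_big_dep (mem (nz_levels k s))) /=; last by move=> t p _ /andP [].
apply: eq_bigr => p; rewrite inE => /andP [fp c0].
rewrite -(card_disjoint_family_union S T); last by rewrite inE mul0mx eq_sym.
by rewrite -sum1_card; apply: eq_bigl => t; rewrite !inE fp c0.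
Qed.

Lemma exists_blocking_family_union k s T (Om : finType) (S : Om -> {set 'rV[F]_k}) N D :
  (s <= k)%N -> (0 < #|Om|)%N ->
  (forall (M : 'M[F]_(k, s)) (c : 'rV[F]_s), row_full M -> c != 0 ->
     (#|[set w | [disjoint S w & level_set M c]]| * D <= N * #|Om|)%N) ->
  (q ^ (k * s) * (q ^ s - 1) * N ^ T < #|invertible_mx s| * D ^ T)%N ->
  exists t : {ffun 'I_T -> Om}, blocking s (family_union S t).
Proof.
move=> sk Om0 miss.
have [/existsP // | /existsPn unblocked] :=
  boolP [exists t : {ffun 'I_T -> Om}, blocking s (family_union S t)].
rewrite ltnNge => /negP union_bound; exfalso; apply: union_bound.
rewrite -(leq_pmul2l (_ : 0 < #|Om| ^ T)%N) ?expn_gt0 ?Om0 //.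
have lower : (#|Om| ^ T * #|invertible_mx s| <=
    \sum_(t : {ffun 'I_T -> Om}) #|missed_levels s S t|)%N.
  rewrite -[T in (_ ^ T)%N]card_ord -card_ffun -sum_nat_const; apply: leq_sum => t _.
  by apply: invertible_le_missed_levels => //; apply: setU11.
rewrite sum_card_missed_levels in lower.
rewrite mulnA; apply: leq_trans (leq_mul lower (leqnn _)) _.
apply: leq_trans (_ : #|nz_levels k s| * (N * #|Om|) ^ T <= _)%N; last first.
  apply: leq_trans (leq_mul (card_nz_levels k s) (leqnn _)) _.
  by rewrite expnMn; apply: eq_leq; lia.
rewrite big_distrl -sum_nat_const; apply: leq_sum => p; rewrite inE => /andP [fullM c0].
change (#|[set w | [disjoint S w & level_set p.1 p.2]]| ^ T * D ^ T <= (N * #|Om|) ^ T)%N.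
by rewrite -expnMn; case: T {unblocked lower} => // T; rewrite leq_exp2r // miss.
Qed.

Definition colspan n m (A : 'M[F]_(n, m)) : {set 'cV[F]_n} := [set A *m w | w : 'cV[F]_m].

Lemma card_colspan_le n m (A : 'M[F]_(n, m)) : (#|colspan A| <= q ^ m)%N.
Proof. by apply: leq_trans (leq_imset_card _ _) _; rewrite card_mx muln1. Qed.

Lemma colspan_row_mx_sub n m (b : 'cV[F]_n) (A : 'M[F]_(n, m)) :
  colspan (row_mx b A) \subset [set x.1 + b *m x.2 | x in setX (colspan A) [set: 'cV[F]_1]].
Proof.
apply/subsetP => _ /imsetP [w _ ->]; rewrite -[w]vsubmxK mul_row_col.
apply/imsetP; exists (A *m dsubmx w, usubmx w); last by rewrite addrC.
by rewrite !inE andbT; apply/imsetP; exists (dsubmx w).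
Qed.

Lemma colspan_row_mx_mem n m (b : 'cV[F]_n) (A : 'M[F]_(n, m)) :
  b \in colspan A -> colspan (row_mx b A) \subset colspan A.
Proof.
move=> /imsetP [v _ ->]; apply/subsetP => _ /imsetP [w _ ->].
rewrite -[w]vsubmxK mul_row_col -mulmxA -mulmxDr.
by apply/imsetP; exists (v *m usubmx w + dsubmx w).
Qed.

Lemma sum_card_colspan_row_mx_le m (A : 'M[F]_(m.+2, m)) :
  (\sum_(b : 'cV[F]_m.+2) #|colspan (row_mx b A)| <= q ^ m * q ^ m * (q ^ 3 - q + 1))%N.
Proof.
set V := colspan A; have Vq := card_colspan_le A.
rewrite (bigID (mem V)) /=.
have inV : (\sum_(b in V) #|colspan (row_mx b A)| <= #|V| * #|V|)%N.
  rewrite -sum_nat_const; apply: leq_sum => b bV.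
  exact/subset_leq_card/colspan_row_mx_mem.
have notinV : (\sum_(b | b \notin V) #|colspan (row_mx b A)| <= #|~: V| * (q * #|V|))%N.
  rewrite -(sum_nat_cond_const (fun b => b \notin V)).
  apply: leq_sum => b _; apply: leq_trans (subset_leq_card (colspan_row_mx_sub b A)) _.
  by apply: leq_trans (leq_imset_card _ _) _; rewrite cardsX cardsT card_mx muln1 mulnC.
apply: leq_trans (leq_add inV notinV) _.
have -> : #|~: V| = (q ^ 2 * q ^ m - #|V|)%N.
  by have := cardsC V; rewrite card_mx muln1 -expnD => <-; rewrite addKn.
exact: colspan_count_arith (card_finNzRing_gt1 F) Vq.
Qed.

Lemma sum_card_colspan_le m :
  (\sum_(A : 'M[F]_(m.+2, 1 + m)) #|colspan A| <=
   q ^ (m.+2 * m) * (q ^ m * q ^ m * (q ^ 3 - q + 1)))%N.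
Proof.
have row_mx_bij : bijective (fun p : 'cV[F]_m.+2 * 'M[F]_(m.+2, m) => row_mx p.1 p.2).
  exists (fun A => (lsubmx A, rsubmx A)) => [[b A] | A] /=; first by rewrite row_mxKl row_mxKr.
  exact: hsubmxK.
rewrite (reindex _ (onW_bij _ row_mx_bij)) /=.
rewrite -(pair_big predT predT (fun b A => #|colspan (row_mx b A)|)) /=.
rewrite exchange_big /= -[(q ^ (m.+2 * m))%N]card_mx -sum_nat_const.
by apply: leq_sum => A _; apply: sum_card_colspan_row_mx_le.
Qed.

Lemma card_lsubmx_in_colspan k n :
  #|[set R : 'M[F]_(k, 1 + n) | lsubmx R \in colspan (rsubmx R)]| =
  (\sum_(A : 'M[F]_(k, n)) #|colspan A|)%N.
Proof.
rewrite -sum1_card (partition_big rsubmx predT) //=; apply: eq_bigr => A _.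
have row_mx_inj : injective (fun u : 'cV[F]_k => row_mx u A).
  by move=> u v /(congr1 lsubmx); rewrite !row_mxKl.
rewrite -(card_imset _ row_mx_inj) -sum1_card; apply: eq_bigl => R.
apply/andP/imsetP => [[] | [u uA ->]].
  by rewrite inE => RA /eqP RAe; exists (lsubmx R); rewrite -?RAe ?hsubmxK.
by rewrite inE row_mxKl row_mxKr.
Qed.

Lemma notin_rowspace_lsubmx k n (R : 'M[F]_(k, 1 + n)) :
  ~~ (row_mx 1%:M 0 <= R)%MS -> lsubmx R \in colspan (rsubmx R).
Proof.
rewrite submxE => /matrix0Pn [i [j e1R]].
pose z : 'cV[F]_(1 + n) := cokermx R *m delta_mx j 0.
have Rz : R *m z = 0 by rewrite /z mulmxA mulmx_coker mul0mx.
have a0 : usubmx z 0 0 != 0.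
  have e1z : row_mx 1%:M 0 *m z = usubmx z.
    by rewrite -[z]vsubmxK mul_row_col mul1mx mul0mx addr0 col_mxKu.
  by rewrite -e1z /z mulmxA -colE mxE -(ord1 i).
set a := usubmx z 0 0 in a0.
move: Rz; rewrite -[R]hsubmxK -[z]vsubmxK mul_row_col [usubmx z]mx11_scalar -/a.
rewrite mul_mx_scalar => /eqP; rewrite addr_eq0 => /eqP aR.
rewrite hsubmxK; apply/imsetP; exists (- a^-1 *: dsubmx z) => //.
by rewrite -scalemxAr scaleNr -scalerN -aR scalerA mulVf // scale1r.
Qed.

Lemma exists_unitmx_row_mx n (c : 'rV[F]_(1 + n)) : c != 0 ->
  exists2 Q : 'M[F]_(1 + n), Q \in unitmx & c = row_mx 1%:M 0 *m Q.
Proof.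
move=> c0; have := mulmx_ebase c; rewrite rank_rV c0 (@pid_mx_row _ n 1).
rewrite [col_ebase c]mx11_scalar mul_scalar_mx -scalemxAl; set a := col_ebase c 0 0 => ac.
have a0 : a != 0 by apply: contra c0 => /eqP a0; rewrite -ac a0 scale0r.
exists (a *: row_ebase c); first by rewrite unitmxZ ?unitfE // row_ebase_unit.
by rewrite -scalemxAr ac.
Qed.

Lemma card_notin_rowspace m (c : 'rV[F]_m.+2) : c != 0 ->
  (#|[set R : 'M[F]_m.+2 | ~~ (c <= R)%MS]| * q ^ 4 <= (q ^ 3 - q + 1) * q ^ (m.+2 * m.+2))%N.
Proof.
move=> /exists_unitmx_row_mx [Q Qu cQ].
(* Moving c to e_1, a matrix misses e_1 iff its first column is spanned by the others. *)
have to_e1 : (#|[set R : 'M[F]_m.+2 | ~~ (c <= R)%MS]| <=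
    #|[set R : 'M[F]_(m.+2, 1 + (1 + m)) | lsubmx R \in colspan (rsubmx R)]|)%N.
  rewrite -(card_imset _ (can_inj (mulmxKV Qu))).
  apply/subset_leq_card/subsetP => R' /imsetP [R]; rewrite !inE => cR ->.
  apply/notin_rowspace_lsubmx; apply: contra cR => e1R.
  by rewrite cQ -[R](mulmxKV Qu); apply: submxMr.
rewrite card_lsubmx_in_colspan in to_e1.
apply: leq_trans (leq_mul (leq_trans to_e1 (sum_card_colspan_le m)) (leqnn _)) _.
have -> : (q ^ (m.+2 * m.+2) = q ^ (m.+2 * m) * (q ^ m * q ^ m) * q ^ 4)%N.
  by rewrite -!expnD; congr expn; lia.
by apply: eq_leq; move: (q ^ 3 - q + 1)%N => K; lia.
Qed.

Lemma bq_le_card k s (B : {set 'rV[F]_k}) : blocking s B -> (bq F k s <= #|B|)%N.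
Proof.
rewrite /bq; case: arg_minnP => [|B0 _ minB]; last exact: minB.
apply/forallP => v; apply/forallP => U; apply/implyP => _.
by apply/existsP; exists v; rewrite inE /in_affine subrr sub0mx.
Qed.

Lemma card_family_union_le k (Om : finType) (S : Om -> {set 'rV[F]_k}) T
    (t : {ffun 'I_T -> Om}) w :
  (forall o, #|S o| <= w)%N -> (#|family_union S t| <= 1 + T * w)%N.
Proof.
by move=> Sw; rewrite cardsU1 leq_add ?leq_b1 ?card_bigcup_ord_le.
Qed.

Lemma bq_le_family_union k s T (Om : finType) (S : Om -> {set 'rV[F]_k}) N D w :
  (0 < s)%N -> (s <= k)%N -> (0 < #|Om|)%N -> (0 < N)%N -> (0 < D)%N ->
  (forall o, #|S o| <= w)%N ->
  (forall (M : 'M[F]_(k, s)) (c : 'rV[F]_s), row_full M -> c != 0 ->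
     (#|[set w | [disjoint S w & level_set M c]]| * D <= N * #|Om|)%N) ->
  ((q ^ s - 1) * D <= q ^ s * (q * q - q - 1) * N)%N ->
  (q ^ (s * (k - s) + s + 2) * N ^ T.+1 < D ^ T.+1)%N ->
  (bq F k s <= 1 + T * w)%N.
Proof.
move=> s0 sk Om0 N0 D0 Sw miss DN key; have q2 := card_finNzRing_gt1 F.
have K0 : (0 < q * q - q - 1)%N by case: q q2 => [|[|r]] // _; nia.
have expE : (s * s + (s * (k - s) + s + 2) = k * s + s + 2)%N.
  by rewrite !addnA -mulnDr subnKC // mulnC.
have := union_bound_arith (ltnW q2) K0 N0 D0 expE DN key.
move/leq_trans/(_ (leq_mul (card_invertible_mx_lower s0) (leqnn (D ^ T)))).
rewrite [X in (_ < X)%N]mulnAC ltn_pmul2r ?muln_gt0 ?(ltnW q2) // => union_bound.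
have [t /bq_le_card] := exists_blocking_family_union sk Om0 miss union_bound.
by move/leq_trans; apply; apply: card_family_union_le.
Qed.

Lemma bq_le_points k s T : (0 < s)%N -> (s <= k)%N ->
  (q ^ (s * (k - s) + s + 2) * (q ^ s - 1) ^ T.+1 < (q ^ s) ^ T.+1)%N ->
  (bq F k s <= T.+1)%N.
Proof.
move=> s0 sk key; have q2 := card_finNzRing_gt1 F.
have qs1 : (0 < q ^ s - 1)%N by rewrite subn_gt0 -[1%N](expn0 q) ltn_exp2l.
rewrite -add1n -[T in (_ <= _ + T)%N]muln1.
apply: (@bq_le_family_union _ _ _ _ (fun x : 'rV[F]_k => [set x])) key => //.
- by rewrite card_mx expn_gt0 (ltnW q2).
- by rewrite expn_gt0 (ltnW q2).
- by move=> x; rewrite cards1.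
- move=> M c fullM _.
  have -> : [set x | [disjoint [set x] & level_set M c]] = [set x | x *m M != c].
    by apply/setP => x; rewrite !inE disjoints1 inE.
  have := card_preim_mulmx (fun Y => Y != c) fullM; rewrite !mul1n card_mx mul1n => ->.
  rewrite (_ : [set Y | Y != c] = [set~ c]); last by apply/setP => Y; rewrite !inE.
  by rewrite cardsC1 card_mx mul1n subn1.
- rewrite mulnC leq_mul2r leq_pmulr ?orbT //.
  by case: q q2 => [|[|r]] // _; nia.
Qed.

Lemma bq_le_subspaces k s T : (2 <= s)%N -> (s <= k)%N -> (3 <= q)%N ->
  (q ^ (s * (k - s) + s + 2) * (q ^ 3 - q + 1) ^ T.+1 < (q ^ 4) ^ T.+1)%N ->
  (bq F k s <= 1 + T * (q ^ s - 1))%N.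
Proof.
case: s => [|[|m]] // _ sk q3 key; have q0 : (0 < q)%N by apply: leq_trans q3.
pose S (A : 'M[F]_(m.+2, k)) := [set y *m A | y in [set~ (0 : 'rV[F]_m.+2)]].
apply: (@bq_le_family_union _ _ _ _ S) key => //.
- by rewrite card_mx expn_gt0 q0.
- by rewrite addn1.
- by rewrite expn_gt0 q0.
- move=> A; apply: leq_trans (leq_imset_card _ _) _.
  by rewrite cardsC1 card_mx mul1n subn1.
- move=> M c fullM c0; have := card_preim_mulmx (fun R => ~~ (c <= R)%MS) fullM.
  have -> : #|[set w | [disjoint S w & level_set M c]]| =
            #|[set A : 'M[F]_(m.+2, k) | ~~ (c <= A *m M)%MS]|.
    apply: eq_card => A; rewrite !inE; apply/pred0P/idP => [disjS | cA x /=].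
      apply/submxP => -[y cy].
      have y0 : y != 0 by apply: contra c0 => /eqP y0; rewrite cy y0 mul0mx.
      have := disjS (y *m A); rewrite /= !inE -mulmxA -cy eqxx andbT => /negbT/negP.
      by apply; apply/imsetP; exists y; rewrite ?inE.
    apply/negbTE/andP => -[/imsetP [y _ ->]]; rewrite inE => /eqP yAM.
    by move/negP: cA; apply; apply/submxP; exists y; rewrite -yAM mulmxA.
  rewrite card_mx => preim.
  rewrite -(leq_pmul2r (_ : 0 < q ^ (m.+2 * m.+2))%N) ?expn_gt0 ?q0 //.
  rewrite mulnAC preim mulnAC [X in (_ <= X)%N]mulnAC leq_mul2r.
  by rewrite card_notin_rowspace ?orbT.
- by rewrite -mulnA leq_mul ?leq_subr ?pow4_le_cubic.
Qed.

End Counting.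

Theorem theorem1p1 (F : finFieldType) (k s : nat) :
  (2 <= s)%N -> (s <= k)%N ->
  let q := INR #|F| in
  (#|F| = 2%N ->
     Rle (INR (bq F k s))
         (Rplus (Rdiv (INR (s * (k - s) + s + 2))
                      (logb q (Rdiv (pow q s) (Rminus (pow q s) 1))))
                1)) /\
  ((3 <= #|F|)%N ->
     Rle (INR (bq F k s))
         (Rplus (Rdiv (Rmult (Rminus (pow q s) 1) (INR (s * (k - s) + s + 2)))
                      (logb q (Rdiv (pow q 4)
                                    (Rplus (Rminus (pow q 3) q) 1))))
                1)).
Proof.
move=> s2 sk q; have s0 : (0 < s)%N by apply: ltnW.
have q2 := card_finNzRing_gt1 F; have q0 := ltnW q2.
have qs1 : (1 <= #|F| ^ s)%N by rewrite expn_gt0 q0.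
split => [_ | q3].
- have qs2 : (1 < #|F| ^ s)%N by rewrite -[1%N](expn0 #|F|) ltn_exp2l.
  have N0 : (0 < #|F| ^ s - 1)%N by rewrite subn_gt0.
  have ND : (#|F| ^ s - 1 < #|F| ^ s)%N by rewrite ltn_subrL qs1.
  have [T [key TY]] := exists_iterations (s * (k - s) + s + 2) q2 N0 ND.
  have /leP/le_INR := bq_le_points s0 sk key.
  rewrite /q -INR_expn -INR_subn1 // S_INR => bqT.
  by apply: Rle_trans bqT _; apply: Rplus_le_compat_r.
- have [N0 ND] : (0 < #|F| ^ 3 - #|F| + 1 /\ #|F| ^ 3 - #|F| + 1 < #|F| ^ 4)%N.
    by split; [rewrite addn1 | rewrite !expnS expn0 !muln1; nia].
  have [T [key TY]] := exists_iterations (s * (k - s) + s + 2) q2 N0 ND.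
  have := INR_le_affine (bq_le_subspaces s2 sk q3 key) TY.
  have qq3 : (#|F| <= #|F| ^ 3)%N by rewrite -{1}(expn1 #|F|) leq_pexp2l.
  rewrite INR_subn1 // addn1 S_INR INR_subn // !INR_expn.
  by rewrite /q /Rdiv Rmult_assoc.
Qed.
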